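(* For any $n\ge 1$, the Hochschild lattice $(\mathsf{Tr}(n),\preccurlyeq)$ is constructible by interval doubling.
   Context: A triword of size $n$ is a word $u=u_1\cdots u_n$ with $u_i\in\{0,1,2\}$, $u_1\ne 2$, and such that $u_i=0$ implies $u_j\neq 1$ for all $j>i$; $\mathsf{Tr}(n)$ is their set, ordered componentwise ($u\preccurlyeq v$ iff $u_i\le v_i$ for all $i$). Let $\mathbf{2}=\{0<1\}$. For a poset $\mathcal{P}$ and an interval $I$ of $\mathcal{P}$, the interval doubling $\mathcal{P}[I]:=(\mathcal{P}\setminus I)\cup(I\times\mathbf{2})$ is ordered by: $x\preccurlyeq' y$ iff either $x,y\in\mathcal{P}\setminus I$ and $x\preccurlyeq y$; or $x\in\mathcal{P}\setminus I$, $y=(y',b)$ and $x\preccurlyeq y'$; or $x=(x',a)$, $y\in\mathcal{P}\setminus I$ and $x'\preccurlyeq y$; or $x=(x',a)$, $y=(y',b)$, $x'\preccurlyeq y'$ and $a\le b$. A lattice is constructible by interval doubling if it is isomorphic to a poset obtained from the one-element lattice by a finite sequence of interval doublings. *)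

From mathcomp Require Import all_boot.
Set Implicit Arguments. Unset Strict Implicit. Unset Printing Implicit Defensive.

(* A word u_1...u_n over {0,1,2} is a finite function 'I_n -> 'I_3;
   position i (0-based here) corresponds to u_{i+1}. *)
Definition triword (n : nat) (u : {ffun 'I_n -> 'I_3}) : bool :=
  [forall i : 'I_n, (val i == 0) ==> (val (u i) != 2)] &&
  [forall i : 'I_n, forall j : 'I_n,
     ((i < j) && (val (u i) == 0)) ==> (val (u j) != 1)].

Definition Tr (n : nat) : finType := {u : {ffun 'I_n -> 'I_3} | triword u}.

Definition trle (n : nat) : rel (Tr n) :=
  fun u v => [forall i : 'I_n, nat_of_ord ((val u) i) <= nat_of_ord ((val v) i)].

Definition is_interval (T : finType) (le : rel T) (I : {set T}) : Prop :=
  exists a b : T, le a b /\ I = [set x | le a x && le x b].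

(* P[I] := (P \ I) u (I x 2) *)
Definition dbl_type (T : finType) (I : {set T}) : finType :=
  ({x : T | x \notin I} + ({x : T | x \in I} * bool))%type.

Definition dbl_le (T : finType) (le : rel T) (I : {set T}) : rel (dbl_type I) :=
  fun x y =>
    match x, y with
    | inl x', inl y' => le (val x') (val y')
    | inl x', inr (y', _) => le (val x') (val y')
    | inr (x', _), inl y' => le (val x') (val y')
    | inr (x', a), inr (y', b) => le (val x') (val y') && (a ==> b) (* a <= b in 2 = {false < true} *)
    end.

Inductive obtained_by_doubling : forall T : finType, rel T -> Prop :=
| obt_one : obtained_by_doubling (fun _ _ : unit => true)
| obt_double : forall (T : finType) (le : rel T) (I : {set T}),
    obtained_by_doubling le -> is_interval le I ->
    obtained_by_doubling (@dbl_le T le I).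

Definition constructible_by_doubling (T : finType) (le : rel T) : Prop :=
  exists (T' : finType) (le' : rel T') (f : T' -> T),
    obtained_by_doubling le' /\ bijective f /\
    (forall x y, le' x y = le (f x) (f y)).

From mathcomp Require Import all_boot.
Set Implicit Arguments. Unset Strict Implicit. Unset Printing Implicit Defensive.

(* Split a triword of length n+1 into its prefix x, a triword of length n, and
   its last letter k.  The letter 0 can always be appended, 2 can be appended
   as soon as n >= 1, and 1 exactly when x has no letter 0, i.e. when x lies
   above 1...1; and the componentwise order compares prefixes and last letters
   separately.  Hence for n >= 1, Tr(n+1) arises from Tr(n) by first doubling
   all of Tr(n), which gives Tr(n) x 2 (last letters 0 < 2), and then doubling
   the interval [(1...1, 0), (top, 0)] to insert the last letter 1 in between.
   The chain Tr(1) = {0 < 1} is Tr(0) x 2, and Tr(0) has a single element. *)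

Lemma obtained_poset (T : finType) (le : rel T) :
  obtained_by_doubling le -> reflexive le /\ antisymmetric le.
Proof.
elim=> {T le} [|T le I _ [refl anti] _]; first by split=> // [[] []].
split; first by case=> [x|[x a]] /=; rewrite refl ?implybb.
case=> [x|[x a]] [y|[y b]] /=.
- by move/anti=> xy; congr inl; apply: val_inj.
- by move/anti=> xy; move: (valP x) => /=; rewrite xy (valP y).
- by move/anti=> xy; move: (valP y) => /=; rewrite -xy (valP x).
- case/andP=> /andP[xy ab] /andP[yx ba].
  have -> : x = y by apply/val_inj/anti; rewrite xy.
  by case: a b ab ba => [] [].
Qed.

Lemma constructible_poset (T : finType) (le : rel T) :
  constructible_by_doubling le -> reflexive le /\ antisymmetric le.
Proof.
case=> T' [le' [f [/obtained_poset[refl anti] [[g fK gK] le_f]]]].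
split=> [x|x y]; first by rewrite -[x]gK -le_f refl.
by rewrite -[x]gK -[y]gK -!le_f => /anti->.
Qed.

Lemma constructible_iso (T S : finType) (leT : rel T) (leS : rel S) (f : T -> S) :
  constructible_by_doubling leT -> bijective f ->
  {mono f : x y / leT x y >-> leS x y} -> constructible_by_doubling leS.
Proof.
case=> T' [le' [g [obt [g_bij le_g]]]] f_bij le_f.
exists T', le', (f \o g); split=> //; split; first exact: bij_comp.
by move=> x y; rewrite le_g le_f.
Qed.

Lemma constructible_mono_surj (T S : finType) (leT : rel T) (leS : rel S)
    (f : T -> S) :
  constructible_by_doubling leT -> {mono f : x y / leT x y >-> leS x y} ->
  (forall y, exists x, f x = y) -> constructible_by_doubling leS.
Proof.
move=> consT le_f f_surj; have [refl anti] := constructible_poset consT.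
apply: (constructible_iso consT _ le_f).
have f_inj : injective f by move=> x y fxy; apply: anti; rewrite -!le_f fxy !le_f !refl.
apply: (inj_card_bij f_inj); rewrite -(card_codom f_inj).
by apply/subset_leq_card/subsetP=> y _; have [x <-] := f_surj y; apply: codom_f.
Qed.

Lemma constructible_double (T : finType) (le : rel T) (I : {set T}) :
  constructible_by_doubling le -> is_interval le I ->
  constructible_by_doubling (@dbl_le T le I).
Proof.
case=> T' [le' [f [obt [[g fK gK] le_f]]]] [a [b [le_ab I_ab]]].
pose I' := [set x | le' (g a) x && le' x (g b)].
have I'E x : (x \in I') = (f x \in I) by rewrite I_ab !inE !le_f !gK.
have f_out x : x \notin I' -> f x \notin I by rewrite I'E.
have f_in x : x \in I' -> f x \in I by rewrite I'E.
have g_out y : y \notin I -> g y \notin I' by rewrite I'E gK.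
have g_in y : y \in I -> g y \in I' by rewrite I'E gK.
pose F (z : dbl_type I') : dbl_type I := match z with
  | inl x => inl (exist _ (f (val x)) (f_out _ (valP x)))
  | inr (x, c) => inr (exist _ (f (val x)) (f_in _ (valP x)), c) end.
pose G (z : dbl_type I) : dbl_type I' := match z with
  | inl y => inl (exist _ (g (val y)) (g_out _ (valP y)))
  | inr (y, c) => inr (exist _ (g (val y)) (g_in _ (valP y)), c) end.
exists (dbl_type I'), (@dbl_le T' le' I'), F; split; last split.
- by apply: obt_double => //; exists (g a), (g b); rewrite le_f !gK.
- exists G; case=> [x|[x c]] /=; congr (_ _); try congr (_, _);
    by apply: val_inj => /=; rewrite ?fK ?gK.
- by case=> [x|[x c]] [y|[y d]]; rewrite /= le_f.
Qed.

Definition prod2_le (T : finType) (le : rel T) : rel (T * bool) :=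
  fun x y => le x.1 y.1 && (x.2 ==> y.2).

Lemma constructible_prod2 (T : finType) (le : rel T) (bot top : T) :
  (forall x, le bot x) -> (forall x, le x top) ->
  constructible_by_doubling le -> constructible_by_doubling (prod2_le le).
Proof.
move=> le_bot le_top consT.
have intT : is_interval le [set: T].
  by exists bot, top; split=> //; apply/setP=> x; rewrite !inE le_bot le_top.
(* The left summand of [dbl_type [set: T]] is empty. *)
pose f (z : dbl_type [set: T]) := if z is inr (x, b) then (val x, b) else (top, true).
apply: (constructible_mono_surj (constructible_double consT intT) (f := f)).
- have outT (x : {x | x \notin [set: T]}) : False by case: x => x; rewrite in_setT.
  by case=> [x|[x a]] [y|[y b]]; try case: (outT x); try case: (outT y).
- by case=> x b; exists (inr (exist _ x (in_setT x), b)).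
Qed.

Lemma forall_andb (T : finType) (P Q : pred T) :
  [forall x, P x && Q x] = [forall x, P x] && [forall x, Q x].
Proof.
apply/forallP/andP=> [PQ|[/forallP Px /forallP Qx] x]; last by rewrite Px Qx.
by split; apply/forallP=> x; case/andP: (PQ x).
Qed.

Lemma forall_ordS (n : nat) (P : pred 'I_n.+1) :
  [forall i, P i] = P ord_max && [forall j : 'I_n, P (lift ord_max j)].
Proof.
apply/forallP/andP=> [P_all|[P_max /forallP P_lift] i].
  by split=> //; apply/forallP.
by case: (unliftP ord_max i) => [j|] ->.
Qed.

Lemma val_lift_max n (j : 'I_n) : val (lift ord_max j) = val j.
Proof. exact: lift_max. Qed.

Definition extw n (x : {ffun 'I_n -> 'I_3}) (k : 'I_3) : {ffun 'I_n.+1 -> 'I_3} :=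
  [ffun i => if unlift ord_max i is Some j then x j else k].

Definition prefw n (v : {ffun 'I_n.+1 -> 'I_3}) : {ffun 'I_n -> 'I_3} :=
  [ffun j => v (lift ord_max j)].

Section Extension.
Variables (n : nat) (x : {ffun 'I_n -> 'I_3}) (k : 'I_3).

Lemma extw_lift j : extw x k (lift ord_max j) = x j.
Proof. by rewrite ffunE liftK. Qed.

Lemma extw_max : extw x k ord_max = k.
Proof. by rewrite ffunE unlift_none. Qed.

Lemma triword_extw :
  triword (extw x k) = [&& triword x, (n == 0) ==> (val k != 2)
                         & (val k == 1) ==> [forall j, val (x j) != 0]].
Proof.
have first_letter : [forall i, (val i == 0) ==> (val (extw x k i) != 2)] =
    ((n == 0) ==> (val k != 2)) && [forall j, (val j == 0) ==> (val (x j) != 2)].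
  rewrite forall_ordS extw_max; congr (_ && _).
  by apply: eq_forallb => j; rewrite extw_lift val_lift_max.
have no_late_one : [forall i : 'I_n.+1, forall j : 'I_n.+1,
      ((i < j) && (val (extw x k i) == 0)) ==> (val (extw x k j) != 1)] =
    [forall i, (val (x i) == 0) ==> (val k != 1)] &&
    [forall i : 'I_n, forall j : 'I_n,
       ((i < j) && (val (x i) == 0)) ==> (val (x j) != 1)].
  rewrite forall_ordS [X in X && _](_ : _ = true) ?andTb; last first.
    by apply/forallP=> j; rewrite ltnNge -ltnS ltn_ord.
  rewrite -forall_andb; apply: eq_forallb => i.
  rewrite forall_ordS extw_max !extw_lift !lift_max ltn_ord; congr (_ && _).
  by apply: eq_forallb => j; rewrite extw_lift lift_max.
rewrite /triword first_letter no_late_one.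
have -> : [forall i, (val (x i) == 0) ==> (val k != 1)] =
          (val k == 1) ==> [forall j, val (x j) != 0].
  case: (val k == 1); last by apply/forallP=> i; rewrite implybT.
  by apply: eq_forallb => i; rewrite implybF.
by case: (_ ==> _) (_ ==> _) => [] []; rewrite ?andbT ?andbF.
Qed.
End Extension.

Lemma extw_prefw n (v : {ffun 'I_n.+1 -> 'I_3}) : extw (prefw v) (v ord_max) = v.
Proof. by apply/ffunP=> i; rewrite ffunE; case: unliftP => [j ->|->]; rewrite ?ffunE. Qed.

Definition tri0 : 'I_3 := @Ordinal 3 0 isT.
Definition tri1 : 'I_3 := @Ordinal 3 1 isT.
Definition tri2 : 'I_3 := @Ordinal 3 2 isT.

Lemma triword_const n (c : 'I_3) : val c != 2 -> triword [ffun _ : 'I_n => c].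
Proof.
move=> c_ne2; apply/andP; split; apply/forallP=> i.
  by rewrite ffunE implybE c_ne2 orbT.
apply/forallP=> j; rewrite !ffunE.
by case: c c_ne2 => [[|[|[|m]]] ?]; rewrite /= ?implybT ?andbF.
Qed.

Lemma triword_top n : triword [ffun i : 'I_n => if val i == 0 then tri1 else tri2].
Proof.
apply/andP; split; apply/forallP=> i; rewrite ffunE; first by case: (val i == 0).
apply/forallP=> j; rewrite ffunE.
by case: (val i == 0); case: (val j == 0); rewrite ?andbF.
Qed.

Definition trbot n : Tr n := Sub _ (triword_const n (c := tri0) isT).
Definition trones n : Tr n := Sub _ (triword_const n (c := tri1) isT).
Definition trtop n : Tr n := Sub _ (triword_top n).

Section TriwordOrder.
Variable n : nat.
Implicit Types x y z : Tr n.

Lemma trle_trans : transitive (@trle n).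
Proof.
move=> y x z /forallP xy /forallP yz; apply/forallP=> i.
exact: leq_trans (xy i) (yz i).
Qed.

Lemma trle_bot x : trle (trbot n) x.
Proof. by apply/forallP=> i; rewrite ffunE. Qed.

Lemma trle_top x : trle x (trtop n).
Proof.
apply/forallP=> i; rewrite ffunE.
case: eqP => [i0|_]; last by case: (val x i) => [[|[|[|]]]].
case/andP: (valP x) => /forallP /(_ i) + _.
by rewrite i0 /=; case: (val x i) => [[|[|[|]]]].
Qed.

Lemma trle_ones x : trle (trones n) x = [forall j, val (val x j) != 0].
Proof. by apply: eq_forallb => j; rewrite ffunE lt0n. Qed.

End TriwordOrder.

Definition ext_ok n (x : Tr n) (k : 'I_3) : bool :=
  ((n == 0) ==> (val k != 2)) && ((val k == 1) ==> trle (trones n) x).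

(* [trbot] is a junk value, taken when [~~ ext_ok x k]. *)
Definition trext n (x : Tr n) (k : 'I_3) : Tr n.+1 :=
  insubd (trbot n.+1) (extw (val x) k).

Section TriwordExtension.
Variable n : nat.
Implicit Types x y : Tr n.

Lemma val_trext x k : ext_ok x k -> val (trext x k) = extw (val x) k.
Proof. by move=> ok; rewrite insubdK // [_ \in _]triword_extw (valP x) -trle_ones. Qed.

Lemma trle_trext x y k l : ext_ok x k -> ext_ok y l ->
  trle (trext x k) (trext y l) = trle x y && (k <= l).
Proof.
move=> ok_k ok_l; rewrite /trle !val_trext // forall_ordS !extw_max andbC.
by congr (_ && _); apply: eq_forallb => j; rewrite !extw_lift.
Qed.

Lemma trext_surj (v : Tr n.+1) : exists x : Tr n, exists2 k, ext_ok x k & v = trext x k.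
Proof.
have := valP v; rewrite /= -[val v]extw_prefw triword_extw => /and3P[tw ok_2 ok_1].
exists (Sub _ tw), (val v ord_max); first by rewrite /ext_ok ok_2 trle_ones.
by apply: val_inj; rewrite val_trext ?extw_prefw // /ext_ok ok_2 trle_ones.
Qed.

End TriwordExtension.

Definition tri01 (b : bool) : 'I_3 := if b then tri1 else tri0.
Definition tri02 (b : bool) : 'I_3 := if b then tri2 else tri0.

Lemma ext_ok01 n (x : Tr n) b : b ==> trle (trones n) x -> ext_ok x (tri01 b).
Proof. by case: b => ones_x; rewrite /ext_ok implybT. Qed.

Lemma ext_ok02 n (x : Tr n.+1) b : ext_ok x (tri02 b).
Proof. by case: b. Qed.

Lemma trle0 (x y : Tr 0) : trle x y.
Proof. by apply/forallP=> -[]. Qed.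

Lemma constructible_trle0 : constructible_by_doubling (@trle 0).
Proof.
have consU : constructible_by_doubling (fun _ _ : unit => true).
  by exists unit, (fun _ _ => true), id; do !split; [exact: obt_one | exists id].
apply: (constructible_mono_surj consU (f := fun _ => trbot 0)) => [? ?|x].
  exact: trle0.
by exists tt; apply/val_inj/ffunP=> -[].
Qed.

Lemma constructible_trle1 : constructible_by_doubling (@trle 1).
Proof.
have consP := constructible_prod2 (@trle_bot 0) (@trle_top 0) constructible_trle0.
apply: (constructible_mono_surj consP (f := fun z => trext z.1 (tri01 z.2))).
  move=> [x a] [y b]; rewrite trle_trext ?ext_ok01 /prod2_le ?trle0 ?implybT //.
  by case: a b => [] [].
move=> v; have [x [[[|[|[|//]]] lt_k3]] ok_k ->] := trext_surj v.
- by exists (x, false); congr trext; apply: val_inj.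
- by exists (x, true); congr trext; apply: val_inj.
- by [].
Qed.

Section TriwordStep.
Variable n : nat.

Definition ext1_interval : {set Tr n.+1 * bool} :=
  [set z | prod2_le (@trle _) (trones _, false) z &&
           prod2_le (@trle _) z (trtop _, false)].

Lemma in_ext1_interval z : (z \in ext1_interval) = trle (trones _) z.1 && ~~ z.2.
Proof. by rewrite inE /prod2_le trle_top; case: z.2; rewrite ?andbF ?andbT. Qed.

Lemma is_interval_ext1 : is_interval (prod2_le (@trle _)) ext1_interval.
Proof. by exists (trones _, false), (trtop _, false); rewrite /prod2_le trle_top. Qed.

Definition trS_of_dbl (z : dbl_type ext1_interval) : Tr n.+2 :=
  match z with
  | inl y => trext (val y).1 (tri02 (val y).2)
  | inr (y, b) => trext (val y).1 (tri01 b)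
  end.

Lemma trS_of_dbl_mono :
  {mono trS_of_dbl : z w / dbl_le (prod2_le (@trle _)) z w >-> trle z w}.
Proof.
case=> [[[x c] /= Jz]|[[[x c] /= Jz] a]] [[[y d] /= Jw]|[[[y d] /= Jw] b]] /=;
  move: Jz Jw; rewrite !in_ext1_interval /prod2_le /=.
- by move=> _ _; rewrite trle_trext ?ext_ok02 //; case: c d => [] [].
- move=> _ /andP[ones_y /negbTE->].
  by rewrite trle_trext ?ext_ok02 ?ext_ok01 ?ones_y ?implybT //; case: c b => [] [].
- move=> /andP[ones_x /negbTE->] out_y.
  rewrite trle_trext ?ext_ok02 ?ext_ok01 ?ones_x ?implybT //.
  case: a d out_y => [] [] //=; rewrite !andbT andbF => out_y; apply/esym/negbTE.
  by apply: contra out_y; apply: (@trle_trans _ x).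
- move=> /andP[ones_x /negbTE->] /andP[ones_y /negbTE->].
  by rewrite trle_trext ?ext_ok01 ?ones_x ?ones_y ?implybT //= andbT; case: a b => [] [].
Qed.

Lemma trS_of_dbl_surj v : exists z, trS_of_dbl z = v.
Proof.
have [x [[[|[|[|//]]] lt_k3]] ok_k ->] := trext_surj v.
- case ones_x : (trle (trones _) x).
    have Jx : (x, false) \in ext1_interval by rewrite in_ext1_interval ones_x.
    by exists (inr (Sub (x, false) Jx, false)); congr trext; apply: val_inj.
  have Jx : (x, false) \notin ext1_interval by rewrite in_ext1_interval ones_x.
  by exists (inl (Sub (x, false) Jx)); congr trext; apply: val_inj.
- have Jx : (x, false) \in ext1_interval.
    by rewrite in_ext1_interval (implyP (andP ok_k).2).
  by exists (inr (Sub (x, false) Jx, true)); congr trext; apply: val_inj.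
- have Jx : (x, true) \notin ext1_interval by rewrite in_ext1_interval andbF.
  by exists (inl (Sub (x, true) Jx)); congr trext; apply: val_inj.
Qed.
End TriwordStep.

Lemma constructible_trleS n :
  constructible_by_doubling (@trle n.+1) -> constructible_by_doubling (@trle n.+2).
Proof.
move=> consT; have consP := constructible_prod2 (@trle_bot _) (@trle_top _) consT.
exact: constructible_mono_surj (constructible_double consP (@is_interval_ext1 n))
  (@trS_of_dbl_mono n) (@trS_of_dbl_surj n).
Qed.

Lemma constructible_trle n : constructible_by_doubling (@trle n).
Proof.
elim: n => [|[|n] IH]; [exact: constructible_trle0 | exact: constructible_trle1 |].
exact: constructible_trleS.
Qed.

Theorem theorem2p3 (n : nat) : 0 < n -> constructible_by_doubling (@trle n).
Proof. by move=> _; apply: constructible_trle. Qed.
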